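(* Let $(L,\rho,\tau)$ be a probabilistic metric space whose triangle function $\tau$ is sup-continuous and satisfies condition (W). Then the subfamily $P_{fb}(L)$ of nonempty closed bounded subsets and the subfamily $P_{ftb}(L)$ of nonempty closed totally bounded subsets are closed in $P_f(L)$ with respect to the probabilistic Pompeiu–Hausdorff metric $H$ (i.e. if $A_n\to A$ in $(P_f(L),H)$ with all $A_n$ in the subfamily, then $A$ is in the subfamily). Consequently, if $L$ is complete, then $P_{fb}(L)$ and the family $P_k(L)$ of nonempty compact subsets of $L$ are complete with respect to $H$.
   Context: $\Delta^+$ is the set of functions $F:[-\infty,\infty]\to[0,1]$ that are nondecreasing, left-continuous on $\mathbb R$, with $F(-\infty)=0$, $F(\infty)=1$ and $F(0)=0$; ordered pointwise. $\epsilon_0(x)=0$ for $x\le0$, $=1$ for $x>0$. Infimum of $\{F_i\}$ in $\Delta^+$: $G(x)=\sup_{x'<x}\inf_iF_i(x')$; supremum: pointwise. A triangle function is $\tau:\Delta^+\times\Delta^+\to\Delta^+$ commutative, associative, nondecreasing in each argument, with $\tau(F,\epsilon_0)=F$, continuous for weak convergence. A probabilistic metric space $(L,\rho,\tau)$: set $L$, continuous triangle function $\tau$, $\rho:L\times L\to\Delta^+$, $\rho(p,q)=F_{pq}$, with $F_{pp}=\epsilon_0$, $F_{pq}=\epsilon_0\Rightarrow p=q$, $F_{pq}=F_{qp}$, $F_{pr}\ge\tau(F_{pq},F_{qr})$. Strong topology: neighborhood base $U_t(p)=\{q:F_{pq}(t)>1-t\}$; it comes from the uniformity with vicinities $U_t=\{(p,q):F_{pq}(t)>1-t\}$,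 $t>0$; convergence, Cauchy sequences, completeness, compactness refer to it. A set $Y\subset L$ is totally bounded if for every $t>0$ there is a finite $Z\subset L$ with $Y\subset\bigcup_{z\in Z}U_t(z)$. A set $A$ is bounded if $\sup_{t>0}\Phi_A(t)=1$ where $\Phi_A(t)=\inf\{F_{pp'}(t):p,p'\in A\}$. $\tau$ is sup-continuous if $\tau(\sup_iF_i,G)=\sup_i\tau(F_i,G)$ for every family $\{F_i\}\subset\Delta^+$, $G\in\Delta^+$. Condition (W): for all $x>0$, $F,G\in\Delta^+$, $\alpha,\beta\in\mathbb R$, $F(x)>\alpha$ and $G(x)>\beta$ imply $\tau(F,G)(x)>\alpha+\beta-1$. For nonempty $A,B\subset L$: $F_{pB}(x)=\sup_{q\in B}F_{pq}(x)$, $\Gamma^*_{AB}(x)=\inf_{p\in A}F_{pB}(x)$, $F^*_{AB}(x)=\sup_{x'<x}\Gamma^*_{AB}(x')$, $H(A,B)=F_{AB}=\min\{F^*_{AB},F^*_{BA}\}$. $P_f(L)$ is the family of nonempty closed subsets; $A_n\to A$ in $(P_f(L),H)$ iff for every $t>0$, $F_{A_nA}(t)>1-t$ for all large $n$; Cauchy sequences for $H$ analogously. *)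

From Stdlib Require Import Reals List.
From Coquelicot Require Import Coquelicot.
Open Scope R_scope.

(* Distribution functions are represented by their restriction to R; the values
   F(-oo)=0 and F(+oo)=1 are fixed by convention and need not be stored. *)
Definition dfun := R -> R.

Definition Rsup (E : R -> Prop) : R := real (Lub_Rbar E).
Definition Rinf (E : R -> Prop) : R := real (Glb_Rbar E).

Definition in_Dplus (F : dfun) : Prop :=
  (forall x, 0 <= F x <= 1) /\
  (forall x y, x <= y -> F x <= F y) /\
  (forall x eps, 0 < eps -> exists delta, 0 < delta /\
       forall y, x - delta < y < x -> Rabs (F y - F x) < eps) /\
  F 0 = 0.

Definition eps0 : dfun := fun x => if Rle_dec x 0 then 0 else 1.

Definition cont_at (F : dfun) (x : R) : Prop :=
  forall eps, 0 < eps -> exists delta, 0 < delta /\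
    forall y, Rabs (y - x) < delta -> Rabs (F y - F x) < eps.

Definition weak_cv (Fn : nat -> dfun) (F : dfun) : Prop :=
  forall x, cont_at F x -> Un_cv (fun n => Fn n x) (F x).

Definition dle (F G : dfun) : Prop := forall x, F x <= G x.
Definition deq (F G : dfun) : Prop := forall x, F x = G x.

Definition triangle_function (tau : dfun -> dfun -> dfun) : Prop :=
  (forall F G, in_Dplus F -> in_Dplus G -> in_Dplus (tau F G)) /\
  (forall F G, in_Dplus F -> in_Dplus G -> deq (tau F G) (tau G F)) /\
  (forall F G K, in_Dplus F -> in_Dplus G -> in_Dplus K ->
      deq (tau (tau F G) K) (tau F (tau G K))) /\
  (forall F F' G, in_Dplus F -> in_Dplus F' -> in_Dplus G -> dle F F' ->
      dle (tau F G) (tau F' G) /\ dle (tau G F) (tau G F')) /\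
  (forall F, in_Dplus F -> deq (tau F eps0) F) /\
  (forall Fn Gn F G, (forall n, in_Dplus (Fn n)) -> (forall n, in_Dplus (Gn n)) ->
      in_Dplus F -> in_Dplus G -> weak_cv Fn F -> weak_cv Gn G ->
      weak_cv (fun n => tau (Fn n) (Gn n)) (tau F G)).

Definition PM_space (L : Type) (rho : L -> L -> dfun) (tau : dfun -> dfun -> dfun) : Prop :=
  triangle_function tau /\
  (forall p q, in_Dplus (rho p q)) /\
  (forall p, deq (rho p p) eps0) /\
  (forall p q, deq (rho p q) eps0 -> p = q) /\
  (forall p q, deq (rho p q) (rho q p)) /\
  (forall p q r, dle (tau (rho p q) (rho q r)) (rho p r)).

Definition sup_continuous (tau : dfun -> dfun -> dfun) : Prop :=
  forall (I : Type) (Fi : I -> dfun) (S G : dfun),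
    (forall i, in_Dplus (Fi i)) -> in_Dplus G ->
    (forall x, is_lub (fun y => exists i, y = Fi i x) (S x)) ->
    forall x, is_lub (fun y => exists i, y = tau (Fi i) G x) (tau S G x).

Definition condW (tau : dfun -> dfun -> dfun) : Prop :=
  forall x F G alpha beta, 0 < x -> in_Dplus F -> in_Dplus G ->
    F x > alpha -> G x > beta -> tau F G x > alpha + beta - 1.

Section PM.
Context {L : Type} (rho : L -> L -> dfun).

Definition Unb (t : R) (p q : L) : Prop := rho p q t > 1 - t.

Definition is_open (O : L -> Prop) : Prop :=
  forall p, O p -> exists t, 0 < t /\ forall q, Unb t p q -> O q.
Definition is_closed (A : L -> Prop) : Prop := is_open (fun p => ~ A p).

Definition nonempty (A : L -> Prop) : Prop := exists p, A p.

Definition seq_cv (pn : nat -> L) (p : L) : Prop :=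
  forall t, 0 < t -> exists N, forall n, (N <= n)%nat -> Unb t p (pn n).
Definition seq_cauchy (pn : nat -> L) : Prop :=
  forall t, 0 < t -> exists N, forall m n, (N <= m)%nat -> (N <= n)%nat ->
    Unb t (pn m) (pn n).
Definition complete : Prop :=
  forall pn, seq_cauchy pn -> exists p, seq_cv pn p.

Definition totally_bounded (Y : L -> Prop) : Prop :=
  forall t, 0 < t -> exists Z : list L, forall y, Y y -> exists z, In z Z /\ Unb t z y.

Definition Phi (A : L -> Prop) (t : R) : R :=
  Rinf (fun y => exists p p', A p /\ A p' /\ y = rho p p' t).
Definition bounded (A : L -> Prop) : Prop :=
  Rsup (fun y => exists t, 0 < t /\ y = Phi A t) = 1.

Definition compact (A : L -> Prop) : Prop :=
  forall (I : Type) (U : I -> L -> Prop), (forall i, is_open (U i)) ->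
    (forall p, A p -> exists i, U i p) ->
    exists l : list I, forall p, A p -> exists i, In i l /\ U i p.

Definition FpB (p : L) (B : L -> Prop) (x : R) : R :=
  Rsup (fun y => exists q, B q /\ y = rho p q x).
Definition GammaStar (A B : L -> Prop) (x : R) : R :=
  Rinf (fun y => exists p, A p /\ y = FpB p B x).
Definition FStar (A B : L -> Prop) (x : R) : R :=
  Rsup (fun y => exists x', x' < x /\ y = GammaStar A B x').
Definition Hpm (A B : L -> Prop) (x : R) : R := Rmin (FStar A B x) (FStar B A x).

Definition H_cv (An : nat -> L -> Prop) (A : L -> Prop) : Prop :=
  forall t, 0 < t -> exists N, forall n, (N <= n)%nat -> Hpm (An n) A t > 1 - t.
Definition H_cauchy (An : nat -> L -> Prop) : Prop :=
  forall t, 0 < t -> exists N, forall m n, (N <= m)%nat -> (N <= n)%nat ->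
    Hpm (An m) (An n) t > 1 - t.

Definition Pf (A : L -> Prop) : Prop := nonempty A /\ is_closed A.
Definition Pfb (A : L -> Prop) : Prop := Pf A /\ bounded A.
Definition Pftb (A : L -> Prop) : Prop := Pf A /\ totally_bounded A.
Definition Pk (A : L -> Prop) : Prop := nonempty A /\ compact A.

Definition H_closed_family (P : (L -> Prop) -> Prop) : Prop :=
  forall An A, (forall n, P (An n)) -> Pf A -> H_cv An A -> P A.
Definition H_complete_family (P : (L -> Prop) -> Prop) : Prop :=
  forall An, (forall n, P (An n)) -> H_cauchy An -> exists A, P A /\ H_cv An A.
End PM.

(* Condition (W) turns the triangle inequality F_pr >= tau(F_pq, F_qr) into
   F_pr(x) > a + b - 1 whenever F_pq(x) > a and F_qr(x) > b, so the vicinities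
   U_t compose like metric balls: U_s o U_s' is contained in U_(s+s').  H(A_n, A)(t) > 1 - t says that each of A_n, A lies in the
   t-vicinity of the other, and boundedness and total boundedness pass from A_n to A
   by the usual triangle argument.  For completeness, the limit of an H-Cauchy
   sequence is its upper limit {p | p is frequently near A_n}: from any point of a
   late A_n, a chain with geometrically shrinking steps through later A_m converges
   in L to a point of the upper limit.  Compact limits follow because a closed
   totally bounded subset of a complete space is compact. *)

From Pilot Require Import Defs.
From Stdlib Require Import Reals Lra Lia List Classical ClassicalEpsilon.
From Coquelicot Require Import Coquelicot.
Open Scope R_scope.

Lemma Rsup_spec (E : R -> Prop) (b x0 : R) : E x0 -> (forall x, E x -> x <= b) ->
  (forall x, E x -> x <= Rsup E) /\ (forall c, (forall x, E x -> x <= c) -> Rsup E <= c).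
Proof.
  intros H0 Hb. unfold Rsup. destruct (Lub_Rbar_correct E) as [Hub Hlub].
  destruct (Lub_Rbar E) as [l| |]; simpl.
  - split; [exact Hub|]. intros c Hc. exact (Hlub (Finite c) Hc).
  - exfalso. exact (Hlub (Finite b) Hb).
  - exfalso. exact (Hub x0 H0).
Qed.

Lemma Rinf_spec (E : R -> Prop) (b x0 : R) : E x0 -> (forall x, E x -> b <= x) ->
  (forall x, E x -> Rinf E <= x) /\ (forall c, (forall x, E x -> c <= x) -> c <= Rinf E).
Proof.
  intros H0 Hb. unfold Rinf. destruct (Glb_Rbar_correct E) as [Hlb Hglb].
  destruct (Glb_Rbar E) as [l| |]; simpl.
  - split; [exact Hlb|]. intros c Hc. exact (Hglb (Finite c) Hc).
  - exfalso. exact (Hlb x0 H0).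
  - exfalso. exact (Hglb (Finite b) Hb).
Qed.

Lemma Rsup_gt (E : R -> Prop) (b x0 c : R) : E x0 -> (forall x, E x -> x <= b) ->
  Rsup E > c -> exists x, E x /\ x > c.
Proof.
  intros H0 Hb Hc. apply NNPP. intro Hn.
  assert (Rsup E <= c); [|lra].
  apply (proj2 (Rsup_spec E b x0 H0 Hb)). intros x Hx.
  apply Rnot_lt_le. intro. apply Hn. exists x. auto.
Qed.

Lemma dependent_choice {X : Type} (P : nat -> X -> Prop) (R : nat -> X -> X -> Prop) (x0 : X) :
  P O x0 -> (forall k x, P k x -> exists y, P (S k) y /\ R k x y) ->
  exists xs : nat -> X, xs O = x0 /\ forall k, P k (xs k) /\ R k (xs k) (xs (S k)).
Proof.
  intros H0 Hstep.
  pose (next k x := epsilon (inhabits x0) (fun y => P (S k) y /\ R k x y)).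
  assert (Hnext : forall k x, P k x -> P (S k) (next k x) /\ R k x (next k x)).
  { intros k x Hx. apply (epsilon_spec (inhabits x0) (fun y => P (S k) y /\ R k x y)).
    exact (Hstep k x Hx). }
  pose (xs := fix xs k := match k with O => x0 | S k' => next k' (xs k') end).
  assert (HP : forall k, P k (xs k)).
  { induction k as [|k IH]; [exact H0|]. exact (proj1 (Hnext k _ IH)). }
  exists xs. split; [reflexivity|]. intro k. split; [apply HP|]. exact (proj2 (Hnext k _ (HP k))).
Qed.

Lemma increasing_majorant (f : nat -> nat) :
  exists M : nat -> nat, forall k, (f k <= M k)%nat /\ (k <= M k)%nat /\ (M k <= M (S k))%nat.
Proof.
  pose (M := fix M k := match k with O => f O | S k' => S (Nat.max (M k') (f k)) end).
  assert (HM : forall k, (f k <= M k)%nat /\ (k <= M k)%nat).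
  { induction k as [|k IH]; simpl; lia. }
  exists M. intro k. split; [apply HM|]. split; [apply HM|]. simpl. lia.
Qed.

Lemma geom_S (e : R) (k : nat) : e * (/2) ^ S k = e * (/2) ^ k / 2.
Proof. simpl. field. Qed.

Lemma geom_pos (e : R) (k : nat) : 0 < e -> 0 < e * (/2) ^ k.
Proof. intro He. apply Rmult_lt_0_compat; [exact He|]. apply pow_lt. lra. Qed.

Lemma geom_eventually_lt (e d : R) : 0 < e -> 0 < d ->
  exists K, forall k, (K <= k)%nat -> e * (/2) ^ k < d.
Proof.
  intros He Hd.
  destruct (pow_lt_1_zero (/2) ltac:(rewrite Rabs_pos_eq; lra) (d / e)
    ltac:(apply Rdiv_lt_0_compat; lra)) as [K HK].
  exists K. intros k Hk. specialize (HK k Hk).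
  rewrite Rabs_pos_eq in HK by (apply pow_le; lra).
  apply (Rmult_lt_compat_l e) in HK; [|exact He].
  replace (e * (d / e)) with d in HK by (field; lra). exact HK.
Qed.

Definition finitely_covered {X I : Type} (U : I -> X -> Prop) (S : X -> Prop) : Prop :=
  exists l : list I, forall p, S p -> exists i, In i l /\ U i p.

Lemma finitely_covered_of_pieces {X I Z : Type} (U : I -> X -> Prop) (T : Z -> X -> Prop)
  (zs : list Z) (S : X -> Prop) :
  (forall p, S p -> exists z, In z zs /\ T z p) ->
  (forall z, In z zs -> finitely_covered U (fun p => S p /\ T z p)) ->
  finitely_covered U S.
Proof.
  revert S. induction zs as [|z zs IH]; intros S HS Hpieces.
  - exists nil. intros p Hp. destruct (HS p Hp) as [z [[] _]].
  - destruct (Hpieces z (or_introl eq_refl)) as [l1 Hl1].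
    destruct (IH (fun p => S p /\ ~ T z p)) as [l2 Hl2].
    + intros p [Hp Hn]. destruct (HS p Hp) as [z' [[<-|Hz'] HT]]; [contradiction|eauto].
    + intros z' Hz'. destruct (Hpieces z' (or_intror Hz')) as [l Hl].
      exists l. intros p [[Hp _] HT]. apply Hl. auto.
    + exists (l1 ++ l2). intros p Hp.
      destruct (classic (T z p)) as [HT|HT];
        [destruct (Hl1 p (conj Hp HT)) as [i [Hi Hu]] | destruct (Hl2 p (conj Hp HT)) as [i [Hi Hu]]];
        exists i; split; auto; apply in_or_app; auto.
Qed.
Section Probabilistic_metric_space.
Context {L : Type} (rho : L -> L -> dfun) (tau : dfun -> dfun -> dfun).
Hypothesis HPM : PM_space L rho tau.
Hypothesis HW : condW tau.

Lemma rho_range p q x : 0 <= rho p q x <= 1.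
Proof. destruct HPM as [_ [Hin _]]. apply (Hin p q). Qed.

Lemma rho_mono p q x y : x <= y -> rho p q x <= rho p q y.
Proof. destruct HPM as [_ [Hin _]]. apply (Hin p q). Qed.

Lemma rho_at_0 p q : rho p q 0 = 0.
Proof. destruct HPM as [_ [Hin _]]. apply (Hin p q). Qed.

Lemma rho_sym p q x : rho p q x = rho q p x.
Proof. destruct HPM as [_ [_ [_ [_ [Hsym _]]]]]. apply Hsym. Qed.

Lemma rho_refl p x : rho p p x = eps0 x.
Proof. destruct HPM as [_ [_ [Hrefl _]]]. apply Hrefl. Qed.

Lemma rho_triangle_W p q r x a b :
  0 < x -> rho p q x > a -> rho q r x > b -> rho p r x > a + b - 1.
Proof.
  intros Hx Hpq Hqr. destruct HPM as [_ [Hin [_ [_ [_ Htri]]]]].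
  pose proof (HW x (rho p q) (rho q r) a b Hx (Hin p q) (Hin q r) Hpq Hqr).
  pose proof (Htri p q r x). lra.
Qed.

Lemma Unb_rho_gt t x p q : t <= x -> Unb rho t p q -> rho p q x > 1 - t.
Proof. unfold Unb. intros Htx H. pose proof (rho_mono p q t x Htx). lra. Qed.

Lemma Unb_pos t p q : Unb rho t p q -> 0 < t.
Proof.
  intro H. apply Rnot_le_lt. intro Ht.
  pose proof (Unb_rho_gt t 0 p q Ht H). rewrite rho_at_0 in *. lra.
Qed.

Lemma Unb_mono s t p q : s <= t -> Unb rho s p q -> Unb rho t p q.
Proof. intros Hst H. pose proof (Unb_rho_gt s t p q Hst H). unfold Unb. lra. Qed.

Lemma Unb_sym t p q : Unb rho t p q -> Unb rho t q p.
Proof. unfold Unb. rewrite rho_sym. auto. Qed.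

Lemma Unb_refl t p : 0 < t -> Unb rho t p p.
Proof. unfold Unb. intro Ht. rewrite rho_refl. unfold eps0. destruct (Rle_dec t 0); lra. Qed.

Lemma Unb_trans s s' p q r : Unb rho s p q -> Unb rho s' q r -> Unb rho (s + s') p r.
Proof.
  intros Hpq Hqr. pose proof (Unb_pos _ _ _ Hpq). pose proof (Unb_pos _ _ _ Hqr).
  pose proof (Unb_rho_gt s (s + s') p q ltac:(lra) Hpq).
  pose proof (Unb_rho_gt s' (s + s') q r ltac:(lra) Hqr).
  pose proof (rho_triangle_W p q r (s + s') _ _ ltac:(lra) H1 H2). unfold Unb. lra.
Qed.

Lemma Unb_limit (ps : nat -> L) a p s t :
  seq_cv rho ps a -> (exists K, forall m, (K <= m)%nat -> Unb rho s p (ps m)) -> s < t ->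
  Unb rho t p a.
Proof.
  intros Hcv [K HK] Hst. destruct (Hcv (t - s) ltac:(lra)) as [N HN].
  pose proof (HK (Nat.max K N) ltac:(lia)).
  pose proof (Unb_sym _ _ _ (HN (Nat.max K N) ltac:(lia))).
  replace t with (s + (t - s)) by ring. eapply Unb_trans; eauto.
Qed.

Lemma cauchy_of_centres (w c : nat -> L) (r : nat -> R) :
  (forall d, 0 < d -> exists K, r K < d) ->
  (forall k m, (k <= m)%nat -> Unb rho (r k) (c k) (w m)) -> seq_cauchy rho w.
Proof.
  intros Hr Hwc t Ht. destruct (Hr (t / 2) ltac:(lra)) as [K HK].
  exists K. intros m n Hm Hn.
  pose proof (Unb_trans _ _ _ _ _ (Unb_sym _ _ _ (Hwc K m Hm)) (Hwc K n Hn)).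
  eapply Unb_mono; [|eassumption]. lra.
Qed.

Lemma geometric_chain (e : R) (ps : nat -> L) : 0 < e ->
  (forall k, Unb rho (e * (/2) ^ S k) (ps k) (ps (S k))) ->
  forall k m, (k <= m)%nat -> Unb rho (e * (/2) ^ k) (ps k) (ps m).
Proof.
  intros He Hstep k m Hkm.
  assert (Hfar : forall d, Unb rho (e * (/2) ^ k - e * (/2) ^ S (d + k)) (ps k) (ps (S (d + k)))).
  { induction d as [|d IH].
    - rewrite Nat.add_0_l. eapply Unb_mono; [|apply Hstep]. rewrite geom_S. lra.
    - eapply Unb_mono; [|exact (Unb_trans _ _ _ _ _ IH (Hstep (S (d + k))))].
      change (S d + k)%nat with (S (d + k)). rewrite (geom_S e (S (d + k))). lra. }
  destruct (Nat.eq_dec k m) as [<-|Hne].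
  - apply Unb_refl, geom_pos, He.
  - replace m with (S ((m - S k) + k)) by lia.
    eapply Unb_mono; [|apply Hfar]. pose proof (geom_pos e (S (m - S k + k)) He). lra.
Qed.

Lemma closed_seq_limit (A : L -> Prop) (w : nat -> L) x :
  is_closed rho A -> (forall k, A (w k)) -> seq_cv rho w x -> A x.
Proof.
  intros Hcl Hw Hcv. apply NNPP. intro Hx.
  destruct (Hcl x Hx) as [t [Ht Hout]]. destruct (Hcv t Ht) as [N HN].
  exact (Hout (w N) (HN N (le_n N)) (Hw N)).
Qed.

Definition in_vicinity (t : R) (A B : L -> Prop) : Prop :=
  forall p, A p -> exists q, B q /\ Unb rho t p q.



Lemma FpB_spec p (B : L -> Prop) x : nonempty B ->
  (forall q, B q -> rho p q x <= FpB rho p B x) /\ 0 <= FpB rho p B x <= 1 /\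
  (forall c, FpB rho p B x > c -> exists q, B q /\ rho p q x > c).
Proof.
  intros [q0 Hq0]. unfold FpB.
  set (E := fun y => exists q, B q /\ y = rho p q x).
  assert (HE0 : E (rho p q0 x)) by (exists q0; auto).
  assert (HEb : forall y, E y -> y <= 1) by (intros y [q [_ ->]]; apply rho_range).
  destruct (Rsup_spec E 1 _ HE0 HEb) as [Hub Hlub].
  split; [|split; [split|]].
  - intros q Hq. apply Hub. exists q; auto.
  - pose proof (Hub _ HE0). pose proof (rho_range p q0 x). lra.
  - apply Hlub. exact HEb.
  - intros c Hc. destruct (Rsup_gt E 1 _ c HE0 HEb Hc) as [y [[q [Hq ->]] Hy]]. eauto.
Qed.

Lemma GammaStar_spec (A B : L -> Prop) x : nonempty A -> nonempty B ->
  (forall p, A p -> GammaStar rho A B x <= FpB rho p B x) /\ 0 <= GammaStar rho A B x <= 1 /\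
  (forall c, (forall p, A p -> c <= FpB rho p B x) -> c <= GammaStar rho A B x).
Proof.
  intros [p0 Hp0] HB. unfold GammaStar.
  set (E := fun y => exists p, A p /\ y = FpB rho p B x).
  assert (HE0 : E (FpB rho p0 B x)) by (exists p0; auto).
  assert (HEb : forall y, E y -> 0 <= y) by (intros y [p [_ ->]]; apply (FpB_spec p B x HB)).
  destruct (Rinf_spec E 0 _ HE0 HEb) as [Hlb Hglb].
  split; [|split; [split|]].
  - intros p Hp. apply Hlb. exists p; auto.
  - apply Hglb. exact HEb.
  - pose proof (Hlb _ HE0). pose proof (FpB_spec p0 B x HB). lra.
  - intros c Hc. apply Hglb. intros y [p [Hp ->]]. auto.
Qed.

Lemma FStar_in_vicinity (A B : L -> Prop) t : nonempty A -> nonempty B ->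
  FStar rho A B t > 1 - t -> in_vicinity t A B.
Proof.
  intros HA HB Ht p Hp. unfold FStar in Ht.
  destruct (Rsup_gt (fun y => exists x', x' < t /\ y = GammaStar rho A B x') 1
              (GammaStar rho A B (t - 1)) (1 - t)) as [y [[x' [Hx' ->]] Hy]]; auto.
  - exists (t - 1). split; [lra|auto].
  - intros y [x' [_ ->]]. apply (GammaStar_spec A B x' HA HB).
  - destruct (GammaStar_spec A B x' HA HB) as [Hle _].
    destruct (FpB_spec p B x' HB) as [_ [_ Hgt]].
    destruct (Hgt (1 - t)) as [q [Hq Hpq]]; [pose proof (Hle p Hp); lra|].
    exists q. split; [exact Hq|]. unfold Unb. pose proof (rho_mono p q x' t ltac:(lra)). lra.
Qed.

Lemma FStar_of_in_vicinity (A B : L -> Prop) s t : nonempty A -> nonempty B -> s < t ->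
  in_vicinity s A B -> FStar rho A B t > 1 - t.
Proof.
  intros HA HB Hst HAB.
  assert (Hs : 1 - s <= GammaStar rho A B s).
  { apply (GammaStar_spec A B s HA HB). intros p Hp. destruct (HAB p Hp) as [q [Hq Hpq]].
    pose proof (proj1 (FpB_spec p B s HB) q Hq). unfold Unb in Hpq. lra. }
  assert (GammaStar rho A B s <= FStar rho A B t); [|lra].
  unfold FStar.
  apply (Rsup_spec _ 1 (GammaStar rho A B s)); [exists s; auto| |exists s; auto].
  intros y [x' [_ ->]]. apply (GammaStar_spec A B x' HA HB).
Qed.

Lemma Hpm_in_vicinity (A B : L -> Prop) t : nonempty A -> nonempty B ->
  Hpm rho A B t > 1 - t -> in_vicinity t A B /\ in_vicinity t B A.
Proof.
  intros HA HB H. unfold Hpm in H.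
  pose proof (Rmin_l (FStar rho A B t) (FStar rho B A t)).
  pose proof (Rmin_r (FStar rho A B t) (FStar rho B A t)).
  split; apply FStar_in_vicinity; auto; lra.
Qed.

Lemma Hpm_of_in_vicinity (A B : L -> Prop) s t : nonempty A -> nonempty B -> s < t ->
  in_vicinity s A B -> in_vicinity s B A -> Hpm rho A B t > 1 - t.
Proof.
  intros HA HB Hst HAB HBA. unfold Hpm. apply Rmin_glb_lt.
  - exact (FStar_of_in_vicinity A B s t HA HB Hst HAB).
  - exact (FStar_of_in_vicinity B A s t HB HA Hst HBA).
Qed.

Lemma H_cv_in_vicinity (An : nat -> L -> Prop) (A : L -> Prop) :
  (forall n, nonempty (An n)) -> nonempty A -> H_cv rho An A ->
  forall s, 0 < s -> exists n, in_vicinity s A (An n).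
Proof.
  intros Hne HA Hcv s Hs. destruct (Hcv s Hs) as [N HN].
  exists N. exact (proj2 (Hpm_in_vicinity _ _ s (Hne N) HA (HN N (le_n N)))).
Qed.


Lemma Phi_spec (A : L -> Prop) t : nonempty A ->
  (forall p p', A p -> A p' -> Phi rho A t <= rho p p' t) /\ Phi rho A t <= 1 /\
  (forall c, (forall p p', A p -> A p' -> c <= rho p p' t) -> c <= Phi rho A t).
Proof.
  intros [p0 Hp0]. unfold Phi.
  set (E := fun y => exists p p', A p /\ A p' /\ y = rho p p' t).
  assert (HE0 : E (rho p0 p0 t)) by (exists p0, p0; auto).
  assert (HEb : forall y, E y -> 0 <= y) by (intros y [p [p' [_ [_ ->]]]]; apply rho_range).
  destruct (Rinf_spec E 0 _ HE0 HEb) as [Hlb Hglb].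
  split; [|split].
  - intros p p' Hp Hp'. apply Hlb. exists p, p'; auto.
  - pose proof (Hlb _ HE0). pose proof (rho_range p0 p0 t). lra.
  - intros c Hc. apply Hglb. intros y [p [p' [Hp [Hp' ->]]]]. auto.
Qed.

Lemma bounded_iff (A : L -> Prop) : nonempty A ->
  (Defs.bounded rho A <-> forall e, 0 < e -> exists t, 0 < t /\
     forall p p', A p -> A p' -> rho p p' t > 1 - e).
Proof.
  intros HA. unfold Defs.bounded.
  set (E := fun y => exists t, 0 < t /\ y = Phi rho A t).
  assert (HE1 : E (Phi rho A 1)) by (exists 1; split; [lra|auto]).
  assert (HEb : forall y, E y -> y <= 1) by (intros y [t [_ ->]]; apply (Phi_spec A t HA)).
  destruct (Rsup_spec E 1 _ HE1 HEb) as [Hub Hlub].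
  split.
  - intros Hsup e He.
    destruct (Rsup_gt E 1 _ (1 - e) HE1 HEb ltac:(lra)) as [y [[t [Ht ->]] Hy]].
    exists t. split; [exact Ht|]. intros p p' Hp Hp'.
    pose proof (proj1 (Phi_spec A t HA) p p' Hp Hp'). lra.
  - intros Hb. apply Rle_antisym; [exact (Hlub 1 HEb)|].
    apply le_epsilon. intros e He. destruct (Hb e He) as [t [Ht Hrho]].
    assert (1 - e <= Phi rho A t).
    { apply (Phi_spec A t HA). intros p p' Hp Hp'. pose proof (Hrho p p' Hp Hp'). lra. }
    pose proof (Hub (Phi rho A t) (ex_intro _ t (conj Ht eq_refl))). lra.
Qed.

Lemma bounded_of_approx (A : L -> Prop) : nonempty A ->
  (forall s, 0 < s -> exists B, nonempty B /\ Defs.bounded rho B /\ in_vicinity s A B) ->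
  Defs.bounded rho A.
Proof.
  intros HA Happrox. apply (bounded_iff A HA). intros e He.
  destruct (Happrox (e / 4) ltac:(lra)) as [B [HB [HbB HAB]]].
  destruct (proj1 (bounded_iff B HB) HbB (e / 2) ltac:(lra)) as [T [HT HBT]].
  set (x := Rmax (e / 4) T).
  assert (Hx1 : e / 4 <= x) by apply Rmax_l. assert (Hx2 : T <= x) by apply Rmax_r.
  exists x. split; [lra|]. intros p p' Hp Hp'.
  destruct (HAB p Hp) as [q [Hq Hpq]]. destruct (HAB p' Hp') as [q' [Hq' Hpq']].
  pose proof (Unb_rho_gt _ x _ _ Hx1 Hpq).
  pose proof (Unb_rho_gt _ x _ _ Hx1 (Unb_sym _ _ _ Hpq')).
  pose proof (HBT q q' Hq Hq'). pose proof (rho_mono q q' T x Hx2).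
  pose proof (rho_triangle_W q q' p' x (1 - e / 2) (1 - e / 4) ltac:(lra) ltac:(lra) H0).
  pose proof (rho_triangle_W p q p' x _ _ ltac:(lra) H H3). lra.
Qed.

Lemma totally_bounded_of_approx (A : L -> Prop) :
  (forall s, 0 < s -> exists B, totally_bounded rho B /\ in_vicinity s A B) ->
  totally_bounded rho A.
Proof.
  intros Happrox t Ht. destruct (Happrox (t / 2) ltac:(lra)) as [B [HtbB HAB]].
  destruct (HtbB (t / 2) ltac:(lra)) as [Z HZ]. exists Z. intros y Hy.
  destruct (HAB y Hy) as [q [Hq Hyq]]. destruct (HZ q Hq) as [z [Hz Hzq]].
  exists z. split; [exact Hz|]. replace t with (t / 2 + t / 2) by field.
  exact (Unb_trans _ _ _ _ _ Hzq (Unb_sym _ _ _ Hyq)).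
Qed.

Lemma bounded_H_limit (An : nat -> L -> Prop) (A : L -> Prop) :
  (forall n, nonempty (An n) /\ Defs.bounded rho (An n)) -> nonempty A -> H_cv rho An A ->
  Defs.bounded rho A.
Proof.
  intros HAn HA Hcv. apply (bounded_of_approx A HA). intros s Hs.
  destruct (H_cv_in_vicinity An A (fun n => proj1 (HAn n)) HA Hcv s Hs) as [n Hn].
  exists (An n). split; [|split]; [apply HAn|apply HAn|exact Hn].
Qed.

Lemma totally_bounded_H_limit (An : nat -> L -> Prop) (A : L -> Prop) :
  (forall n, nonempty (An n) /\ totally_bounded rho (An n)) -> nonempty A -> H_cv rho An A ->
  totally_bounded rho A.
Proof.
  intros HAn HA Hcv. apply totally_bounded_of_approx. intros s Hs.
  destruct (H_cv_in_vicinity An A (fun n => proj1 (HAn n)) HA Hcv s Hs) as [n Hn].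
  exists (An n). split; [apply HAn|exact Hn].
Qed.

Lemma compact_totally_bounded (A : L -> Prop) : Defs.compact rho A -> totally_bounded rho A.
Proof.
  intros Hc t Ht.
  destruct (Hc L (fun p q => exists s, 0 < s < t /\ Unb rho s p q)) as [l Hl].
  - intros p q [s [Hs Hpq]]. exists ((t - s) / 2). split; [lra|].
    intros q' Hq'. exists (s + (t - s) / 2). split; [lra|]. eapply Unb_trans; eauto.
  - intros p Hp. exists p, (t / 2). split; [lra|]. apply Unb_refl. lra.
  - exists l. intros y Hy. destruct (Hl y Hy) as [z [Hz [s [Hs Hzy]]]].
    exists z. split; [exact Hz|]. apply (Unb_mono s); [lra|exact Hzy].
Qed.

Lemma uncovered_nested_pieces {I : Type} (U : I -> L -> Prop) (A : L -> Prop) (r : nat -> R) :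
  (forall k, 0 < r k) -> totally_bounded rho A -> ~ finitely_covered U A ->
  exists (Sq : nat -> L -> Prop) (c : nat -> L),
    (forall k, ~ finitely_covered U (Sq k)) /\
    (forall k m p, (k <= m)%nat -> Sq m p -> Sq k p) /\
    (forall p, Sq O p -> A p) /\
    (forall k p, Sq (S k) p -> Unb rho (r k) (c k) p).
Proof.
  intros Hr Htb HnA.
  set (P := fun (_ : nat) S => ~ finitely_covered U S /\ forall p, S p -> A p).
  set (Rstep := fun k (S S' : L -> Prop) => (forall p, S' p -> S p) /\
                  exists z, forall p, S' p -> Unb rho (r k) z p).
  destruct (dependent_choice P Rstep A) as [Sq [HS0 HSq]].
  - split; auto.
  - intros k S [HnS HSA]. destruct (Htb (r k) (Hr k)) as [Z HZ].
    apply NNPP. intro Hn. apply HnS.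
    apply (finitely_covered_of_pieces U (fun z p => Unb rho (r k) z p) Z).
    + intros p Hp. exact (HZ p (HSA p Hp)).
    + intros z _. apply NNPP. intro Hz. apply Hn.
      exists (fun p => S p /\ Unb rho (r k) z p).
      split; [split; [exact Hz|intros p [Hp _]; auto]|].
      split; [intros p [Hp _]; exact Hp|exists z; intros p [_ Hzp]; exact Hzp].
  - destruct (choice (fun k z => forall p, Sq (S k) p -> Unb rho (r k) z p))
      as [c Hc]; [intro k; apply (HSq k)|].
    exists Sq, c. split; [|split; [|split]].
    + intro k. apply (HSq k).
    + intros k m p Hkm. induction Hkm; auto. intro Hp. apply IHHkm, (HSq m), Hp.
    + intros p Hp. rewrite HS0 in Hp. exact Hp.
    + exact Hc.
Qed.

Lemma compact_of_complete_totally_bounded (A : L -> Prop) :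
  complete rho -> is_closed rho A -> totally_bounded rho A -> Defs.compact rho A.
Proof.
  intros Hcomp Hcl Htb I U HU Hcov. apply NNPP. intro HnA.
  set (r k := (/2) ^ k).
  assert (Hr : forall k, 0 < r k) by (intro k; apply pow_lt; lra).
  destruct (uncovered_nested_pieces U A r Hr Htb HnA) as [Sq [c [Hnc [Hnest [HA Hball]]]]].
  assert (Hne : forall k, exists p, Sq (S k) p).
  { intro k. apply NNPP. intro Hn. apply (Hnc (S k)). exists nil.
    intros p Hp. exfalso. apply Hn. eauto. }
  destruct (choice _ Hne) as [w Hw].
  assert (Hwc : forall k m, (k <= m)%nat -> Unb rho (r k) (c k) (w m)).
  { intros k m Hkm. apply Hball, (Hnest (S k) (S m)); [lia|apply Hw]. }
  assert (Hsmall : forall d, 0 < d -> exists K, r K < d).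
  { intros d Hd. destruct (geom_eventually_lt 1 d Rlt_0_1 Hd) as [K HK].
    exists K. specialize (HK K (le_n K)). rewrite Rmult_1_l in HK. exact HK. }
  destruct (Hcomp w (cauchy_of_centres w c _ Hsmall Hwc)) as [x Hx].
  assert (HAx : A x).
  { apply (closed_seq_limit A w x Hcl); [|exact Hx]. intro k. apply HA, (Hnest O (S k)); [lia|apply Hw]. }
  destruct (Hcov x HAx) as [i Hi]. destruct (HU i x Hi) as [t [Ht Hsub]].
  destruct (Hsmall (t / 4) ltac:(lra)) as [K HK].
  apply (Hnc (S K)). exists (i :: nil). intros p Hp. exists i. split; [left; reflexivity|].
  apply Hsub. apply (Unb_mono (t / 4 + r K + r K)); [lra|].
  apply (Unb_trans _ _ _ (c K)); [|exact (Hball K p Hp)].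
  apply Unb_sym, (Unb_limit w x (c K) (r K)); [exact Hx| |lra].
  exists K. apply Hwc.
Qed.

Definition upper_limit (An : nat -> L -> Prop) (p : L) : Prop :=
  forall t, 0 < t -> forall N, exists n, (N <= n)%nat /\ exists q, An n q /\ Unb rho t p q.

Definition vicinity_cauchy (An : nat -> L -> Prop) : Prop :=
  forall t, 0 < t -> exists N, forall m n, (N <= m)%nat -> (N <= n)%nat ->
    in_vicinity t (An m) (An n).

Lemma H_cauchy_vicinity_cauchy (An : nat -> L -> Prop) :
  (forall n, nonempty (An n)) -> H_cauchy rho An -> vicinity_cauchy An.
Proof.
  intros Hne Hcau t Ht. destruct (Hcau t Ht) as [N HN]. exists N. intros m n Hm Hn.
  exact (proj1 (Hpm_in_vicinity _ _ t (Hne m) (Hne n) (HN m n Hm Hn))).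
Qed.

Lemma upper_limit_closed (An : nat -> L -> Prop) : is_closed rho (upper_limit An).
Proof.
  intros p Hp. apply NNPP. intro Hnear. apply Hp. intros t Ht N. apply NNPP. intro Hfar.
  apply Hnear. exists (t / 2). split; [lra|]. intros q Hpq Hq.
  destruct (Hq (t / 2) ltac:(lra) N) as [n [Hn [q' [Hq' Hqq']]]].
  apply Hfar. exists n. split; [exact Hn|]. exists q'. split; [exact Hq'|].
  replace t with (t / 2 + t / 2) by field. eapply Unb_trans; eauto.
Qed.

Lemma upper_limit_in_vicinity (An : nat -> L -> Prop) : vicinity_cauchy An ->
  forall t, 0 < t -> exists N, forall n, (N <= n)%nat -> in_vicinity t (upper_limit An) (An n).
Proof.
  intros Hcau t Ht. destruct (Hcau (t / 2) ltac:(lra)) as [N HN].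
  exists N. intros n Hn a Ha.
  destruct (Ha (t / 2) ltac:(lra) N) as [m [Hm [q [Hq Haq]]]].
  destruct (HN m n Hm Hn q Hq) as [q' [Hq' Hqq']].
  exists q'. split; [exact Hq'|]. replace t with (t / 2 + t / 2) by field. eapply Unb_trans; eauto.
Qed.

(* A point of a late [An n] starts a chain [p_k] in [An (M k)] with steps [e/2^(k+1)];
   its limit exists by completeness, lies in the upper limit and is [e]-close to the start. *)
Lemma in_vicinity_upper_limit (An : nat -> L -> Prop) : complete rho -> vicinity_cauchy An ->
  forall eps, 0 < eps -> exists N, forall n, (N <= n)%nat -> in_vicinity eps (An n) (upper_limit An).
Proof.
  intros Hcomp Hcau eps Heps.
  set (e := eps / 2). assert (He : 0 < e) by (unfold e; lra).
  destruct (choice (fun k N => forall m n, (N <= m)%nat -> (N <= n)%nat ->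
                      in_vicinity (e * (/2) ^ S k) (An m) (An n))) as [Nf HNf].
  { intro k. apply Hcau, geom_pos, He. }
  destruct (increasing_majorant Nf) as [M HM].
  exists (M O). intros n Hn p Hp.
  destruct (dependent_choice (fun k x => exists n, (M k <= n)%nat /\ An n x)
              (fun k x y => Unb rho (e * (/2) ^ S k) x y) p) as [ps [Hps0 Hps]].
  - exists n. auto.
  - intros k x [m [Hm Hx]]. destruct (HM k) as [H1 [_ H2]].
    destruct (HNf k m (M (S k)) ltac:(lia) ltac:(lia) x Hx) as [y [Hy Hxy]].
    exists y. split; [exists (M (S k)); split; [lia|exact Hy]|exact Hxy].
  - pose proof (geometric_chain e ps He (fun k => proj2 (Hps k))) as Hchain.
    assert (Hsmall : forall d, 0 < d -> exists K, e * (/2) ^ K < d).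
    { intros d Hd. destruct (geom_eventually_lt e d He Hd) as [K HK]. eauto. }
    destruct (Hcomp ps (cauchy_of_centres ps ps _ Hsmall Hchain)) as [a Ha].
    assert (Hnear : forall k t, e * (/2) ^ k < t -> Unb rho t (ps k) a).
    { intros k t Hkt. apply (Unb_limit ps a (ps k) (e * (/2) ^ k)); [exact Ha| |exact Hkt].
      exists k. apply Hchain. }
    exists a. split.
    + intros t Ht N. destruct (geom_eventually_lt e t He Ht) as [K HK].
      set (k := Nat.max K N). destruct (proj1 (Hps k)) as [m [Hm Hx]].
      exists m. split; [pose proof (proj1 (proj2 (HM k))); lia|].
      exists (ps k). split; [exact Hx|]. apply Unb_sym, Hnear, HK. lia.
    + rewrite <- Hps0. apply Hnear. unfold e. simpl. lra.
Qed.

Lemma H_limit_of_cauchy (An : nat -> L -> Prop) : complete rho ->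
  (forall n, nonempty (An n)) -> H_cauchy rho An ->
  Pf rho (upper_limit An) /\ H_cv rho An (upper_limit An).
Proof.
  intros Hcomp Hne Hcau. pose proof (H_cauchy_vicinity_cauchy An Hne Hcau) as Hvc.
  assert (HA : nonempty (upper_limit An)).
  { destruct (in_vicinity_upper_limit An Hcomp Hvc 1 Rlt_0_1) as [N HN].
    destruct (Hne N) as [p Hp]. destruct (HN N (le_n N) p Hp) as [a [Ha _]]. exists a. exact Ha. }
  split; [split; [exact HA|apply upper_limit_closed]|].
  intros t Ht.
  destruct (in_vicinity_upper_limit An Hcomp Hvc (t / 2) ltac:(lra)) as [N1 HN1].
  destruct (upper_limit_in_vicinity An Hvc (t / 2) ltac:(lra)) as [N2 HN2].
  exists (Nat.max N1 N2). intros n Hn.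
  apply (Hpm_of_in_vicinity _ _ (t / 2) t (Hne n) HA ltac:(lra)); [apply HN1|apply HN2]; lia.
Qed.

Lemma Pfb_H_closed : H_closed_family rho (Pfb rho).
Proof.
  intros An A HAn HA Hcv. split; [exact HA|].
  apply (bounded_H_limit An A); [|apply HA|exact Hcv].
  intro n. split; apply HAn.
Qed.

Lemma Pftb_H_closed : H_closed_family rho (Pftb rho).
Proof.
  intros An A HAn HA Hcv. split; [exact HA|].
  apply (totally_bounded_H_limit An A); [|apply HA|exact Hcv].
  intro n. split; apply HAn.
Qed.

Lemma Pfb_H_complete : complete rho -> H_complete_family rho (Pfb rho).
Proof.
  intros Hcomp An HAn Hcau.
  destruct (H_limit_of_cauchy An Hcomp (fun n => proj1 (proj1 (HAn n))) Hcau) as [HA Hcv].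
  exists (upper_limit An). split; [|exact Hcv].
  exact (Pfb_H_closed An _ HAn HA Hcv).
Qed.

Lemma Pk_H_complete : complete rho -> H_complete_family rho (Pk rho).
Proof.
  intros Hcomp An HAn Hcau.
  destruct (H_limit_of_cauchy An Hcomp (fun n => proj1 (HAn n)) Hcau) as [[Hne Hcl] Hcv].
  exists (upper_limit An). split; [split; [exact Hne|]|exact Hcv].
  apply (compact_of_complete_totally_bounded _ Hcomp Hcl).
  apply (totally_bounded_H_limit An _); [|exact Hne|exact Hcv].
  intro n. split; [apply HAn|apply compact_totally_bounded, HAn].
Qed.

End Probabilistic_metric_space.

Theorem theorem4p5 (L : Type) (rho : L -> L -> dfun) (tau : dfun -> dfun -> dfun)
  (HPM : PM_space L rho tau) (Hsup : sup_continuous tau) (HW : condW tau) :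
  H_closed_family rho (Pfb rho) /\ H_closed_family rho (Pftb rho) /\
  (complete rho -> H_complete_family rho (Pfb rho) /\ H_complete_family rho (Pk rho)).
Proof.
  split; [|split].
  - exact (Pfb_H_closed rho tau HPM HW).
  - exact (Pftb_H_closed rho tau HPM HW).
  - intro Hcomp. split.
    + exact (Pfb_H_complete rho tau HPM HW Hcomp).
    + exact (Pk_H_complete rho tau HPM HW Hcomp).
Qed.
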